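(* Let $T$ be a skew truss and $P$ a paragon in $T$. Then $P$ is completely prime if and only if there exists $p\in P$ such that, for all $a,d\in T$, $$[ad,ap,p]\in P\implies P_p^a\text{ is an ideal or } d\in P,$$ and $$[da,pa,p]\in P\implies P_p^a\text{ is an ideal or } d\in P.$$
   Context: A heap is a set with a ternary operation $[-,-,-]$ satisfying $[a_1,a_2,[a_3,a_4,a_5]]=[[a_1,a_2,a_3],a_4,a_5]$ and $[a,a,b]=b=[b,a,a]$. A skew truss is a heap with an associative multiplication satisfying $a[b,c,d]=[ab,ac,ad]$ and $[b,c,d]a=[ba,ca,da]$. A normal sub-heap is a non-empty subset $S$ closed under $[-,-,-]$ with $[[a,e,s],a,e]\in S$ for all $a$ and $e,s\in S$; $a\sim_S b$ iff $[a,b,s]\in S$ for some (equivalently all) $s\in S$. A sub-heap $S$ is closed if $[ts',ts,s]\in S$ and $[s't,st,s]\in S$ for all $s,s'\in S$, $t$. A paragon is a non-empty normal sub-heap $P$ all of whose $\sim_P$-classes are closed. An ideal is a normal sub-heap $I$ with $ti,it\in I$ for all $t\in T$, $i\in I$. For $p\in P$, $a\in T$, $P_p^a=\{[q,p,a]\mid q\in P\}$. A paragon $P$ is completely prime if for all $p\in P$ and $a,b,c\in T$: $[ab,ac,p]\in P$ implies that $P_p^a$ is an ideal or $[b,c,p]\in P$; and $[ba,ca,p]\in P$ implies that $P_p^a$ is an ideal or $[b,c,p]\in P$. *)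

Record skew_truss := SkewTruss {
  car :> Type;
  br : car -> car -> car -> car;
  mul : car -> car -> car;
  br_assoc : forall a1 a2 a3 a4 a5,
      br a1 a2 (br a3 a4 a5) = br (br a1 a2 a3) a4 a5;
  br_mal_l : forall a b, br a a b = b;
  br_mal_r : forall a b, br b a a = b;
  mul_assoc : forall a b c, mul a (mul b c) = mul (mul a b) c;
  mul_br_l : forall a b c d, mul a (br b c d) = br (mul a b) (mul a c) (mul a d);
  mul_br_r : forall a b c d, mul (br b c d) a = br (mul b a) (mul c a) (mul d a)
}.

Arguments br {_}.
Arguments mul {_}.

Section Defs.
Variable T : skew_truss.

Definition subheap (S : T -> Prop) : Prop :=
  forall x y z, S x -> S y -> S z -> S (br x y z).

Definition normal_subheap (S : T -> Prop) : Prop :=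
  (exists s, S s) /\ subheap S /\
  forall a e s, S e -> S s -> S (br (br a e s) a e).

Definition sim (S : T -> Prop) (a b : T) : Prop :=
  exists s, S s /\ S (br a b s).

Definition closed_subheap (S : T -> Prop) : Prop :=
  subheap S /\
  forall s s' t, S s -> S s' ->
    S (br (mul t s') (mul t s) s) /\ S (br (mul s' t) (mul s t) s).

Definition paragon (P : T -> Prop) : Prop :=
  normal_subheap P /\
  forall t0 : T, closed_subheap (fun x => sim P x t0).

Definition ideal (I : T -> Prop) : Prop :=
  normal_subheap I /\ forall t i, I i -> I (mul t i) /\ I (mul i t).

Definition Ppa (P : T -> Prop) (p a : T) : T -> Prop :=
  fun x => exists q, P q /\ x = br q p a.

Definition completely_prime (P : T -> Prop) : Prop :=
  paragon P /\
  forall p a b c, P p ->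
    (P (br (mul a b) (mul a c) p) -> ideal (Ppa P p a) \/ P (br b c p)) /\
    (P (br (mul b a) (mul c a) p) -> ideal (Ppa P p a) \/ P (br b c p)).

End Defs.


(* Since P is a sub-heap, neither the membership of [x,y,p] in P nor the set
   P_p^a depends on the choice of the base point p in P.  Taking c := p in the
   definition gives one direction.  Conversely, given b, c and a base p, apply
   the one-point condition at p0 to d := [b,c,p0]: by distributivity
   a[b,c,p0] = [ab,ac,ap0], so [ad,ap0,p0] = [ab,ac,p0], and the conclusion
   d ∈ P is [b,c,p0] ∈ P; both can be moved back to the base p. *)

Section CompletelyPrime.
Variable T : skew_truss.

Lemma br_brK (x y z w : T) : br (br x y z) z w = br x y w.
Proof. rewrite <- br_assoc, br_mal_l. reflexivity. Qed.

Lemma ideal_eq (I J : T -> Prop) : (forall x, I x <-> J x) -> ideal T I -> ideal T J.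
Proof.
  intros IJ [[[s Is] [I_subheap I_normal]] I_absorb]. split; [split; [|split]|].
  - exists s. apply IJ, Is.
  - intros x y z Jx Jy Jz. apply IJ, I_subheap; apply IJ; assumption.
  - intros a e s' Je Js'. apply IJ, I_normal; apply IJ; assumption.
  - intros t i Ji. destruct (I_absorb t i (proj2 (IJ i) Ji)).
    split; apply IJ; assumption.
Qed.

Variable P : T -> Prop.

Definition prime_at (p : T) : Prop :=
  forall a d : T,
    (P (br (mul a d) (mul a p) p) -> ideal T (Ppa T P p a) \/ P d) /\
    (P (br (mul d a) (mul p a) p) -> ideal T (Ppa T P p a) \/ P d).

Definition completely_prime_at (p : T) : Prop :=
  forall a b c : T,
    (P (br (mul a b) (mul a c) p) -> ideal T (Ppa T P p a) \/ P (br b c p)) /\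
    (P (br (mul b a) (mul c a) p) -> ideal T (Ppa T P p a) \/ P (br b c p)).

Lemma completely_prime_at_prime_at (p : T) : completely_prime_at p -> prime_at p.
Proof.
  intros Hcp a d. specialize (Hcp a d p). rewrite br_mal_r in Hcp. exact Hcp.
Qed.

Hypothesis P_subheap : subheap T P.

Lemma subheap_br_base (x y p p0 : T) : P p -> P p0 -> P (br x y p) -> P (br x y p0).
Proof. intros Pp Pp0 Pxyp. rewrite <- (br_brK x y p p0). apply P_subheap; assumption. Qed.

Lemma Ppa_base (p p0 a x : T) : P p -> P p0 -> Ppa T P p a x -> Ppa T P p0 a x.
Proof.
  intros Pp Pp0 [q [Pq ->]]. exists (br q p p0). split.
  - apply P_subheap; assumption.
  - rewrite br_brK. reflexivity.
Qed.

Lemma ideal_Ppa_base (p p0 a : T) :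
  P p -> P p0 -> ideal T (Ppa T P p a) -> ideal T (Ppa T P p0 a).
Proof.
  intros Pp Pp0. apply ideal_eq. intro x. split; apply Ppa_base; assumption.
Qed.

Lemma prime_at_completely_prime_at (p0 p : T) :
  P p0 -> P p -> prime_at p0 -> completely_prime_at p.
Proof.
  intros Pp0 Pp Hprime a b c.
  destruct (Hprime a (br b c p0)) as [Hleft Hright].
  rewrite mul_br_l, br_brK in Hleft. rewrite mul_br_r, br_brK in Hright.
  split; intro Hin.
  - destruct (Hleft (subheap_br_base _ _ _ _ Pp Pp0 Hin)) as [Hideal | Hbc].
    + left. exact (ideal_Ppa_base _ _ _ Pp0 Pp Hideal).
    + right. exact (subheap_br_base _ _ _ _ Pp0 Pp Hbc).
  - destruct (Hright (subheap_br_base _ _ _ _ Pp Pp0 Hin)) as [Hideal | Hbc].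
    + left. exact (ideal_Ppa_base _ _ _ Pp0 Pp Hideal).
    + right. exact (subheap_br_base _ _ _ _ Pp0 Pp Hbc).
Qed.

End CompletelyPrime.

Theorem lemma4p8 (T : skew_truss) (P : T -> Prop) :
  paragon T P ->
  (completely_prime T P <->
   exists p, P p /\
     forall a d : T,
       (P (br (mul a d) (mul a p) p) -> ideal T (Ppa T P p a) \/ P d) /\
       (P (br (mul d a) (mul p a) p) -> ideal T (Ppa T P p a) \/ P d)).
Proof.
  intros Hpar. pose proof Hpar as [[[s Ps] [P_subheap _]] _]. split.
  - intros [_ Hcp]. exists s. split; [exact Ps|].
    apply (completely_prime_at_prime_at T P s).
    intros a b c. exact (Hcp s a b c Ps).
  - intros [p0 [Pp0 Hprime]]. split; [exact Hpar|].
    intros p a b c Pp.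
    exact (prime_at_completely_prime_at T P P_subheap p0 p Pp0 Pp Hprime a b c).
Qed.
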